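(* In any execution of $\mathcal{U}$, if some process executes line 6 for operation $o$ at time $T$ (that is, in that iteration it read from $S$ at line 5 a tuple whose time field is $t(o)$ and whose pointer field is $h(o)$), then $o$ is done at time $T$.
   Context: Model: an asynchronous shared-memory system with possibly infinitely many processes, any of which may crash, communicating via atomic shared objects. A fetch-and-increment (F\&I) object stores an integer; F\&I$(C)$ atomically returns the current value and increments it. A generalized-compare-and-swap (GCAS) object $O$ stores a value and supports Read$(O)$ and GCAS$(c, O, v_1, v_2)$, which atomically does: if $c(\text{current value of } O, v_1)$ holds then set $O := v_2$ and return true, else return false. Tuples are compared componentwise for $=$; GCAS$(>, A, (t,-,-), v)$ succeeds iff the time field of $A$ is strictly greater than $t$. Implemented type $\mathcal{T} = (OP, RES, Q, \delta)$ with initial state $s_0$; a procedure $apply_{\mathcal{T}}(o,s)$ returns some $(s',r)$ with $(s,o,s',r)\in\delta$. $NULL$ is a value different from every response of $\mathcal{T}$, and $NOOP$ is a name different from every operation of $\mathcal{T}$. Algorithm $\mathcal{U}$: each process $p$ owns a GCAS object $H_p$ with fields $(time, response)$. Shared objects: F\&I object $C$, initially $1$; GCAS object $A$ with fields $(time, op, ptr)$, initially $(0, NOOP, h(NOOP))$, where $h(NOOP)$ is a pointer to an immutable location containing $(0,\perp)$; GCAS object $S$ with fields $(time, state, response, ptr)$, initially $(0, s_0, \perp, h(NOOP))$. Process $p$ performs operation $o$ by calling DoOp$(o)$: (1) DoOp$(o)$ invoked; (2) $t := $ F\&I$(C)$; (3) $H_p := (t, NULL)$; (4) while $H_p = (t,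 NULL)$ do: (5) $(t^*, s^*, r^*, roptr^* ) := S$; (6) GCAS$(=, *roptr^*, (t^*, NULL), (t^*, r^* ))$; (7) GCAS$(>, A, (t,-,-), (t, o, \&H_p))$; (8) $(t', o', roptr') := A$; (9) $(\hat t, \hat r) := *roptr'$; (10) if $(\hat t,\hat r) = (t', NULL)$ then (11) $(s', r') := apply_{\mathcal{T}}(o', s^* )$; (12) GCAS$(=, S, (t^*,s^*,r^*,roptr^* ), (t', s', r', roptr'))$; (13) else GCAS$(=, A, (t', o', roptr'), (t, o, \&H_p))$; end while; (14) return $H_p.response$. Notation: an ''operation'' $o$ means one invocation of DoOp$(o)$ (or the initial $NOOP$). $p(o)$ is the process executing it; $t(o)$ is the value returned by its F\&I at line 2, or $\infty$ if line 2 has not been executed; $h(o)$ is $H_{p(o)}$. For $NOOP$: $t(NOOP)=0$ and $h(NOOP)$ is the immutable location containing $(0,\perp)$. Operation $o$ is done at time $T$ if at some time $T'\le T$, $h(o) = (t(o), r)$ with $r \neq NULL$. ''Operation $o$ is stored in $S$'' means $S = (t(o), -, r, h(o))$ for some $r$; ''line 12 is executed for $o$'' means the new value written in that GCAS has time field $t(o)$ and pointer field $h(o)$. *)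

From Stdlib Require Import Arith.

Set Implicit Arguments.

Inductive OpName (OP : Type) : Type := NOOP | OpN (o : OP).
Arguments NOOP {OP}.

(* Values of response fields: NULL, the initial value bottom, or a response
   of T.  NULL and bottom are distinct from each other and from every response. *)
Inductive Resp (RES : Type) : Type := RNull | RBot | RVal (r : RES).
Arguments RNull {RES}.
Arguments RBot {RES}.

(* Pointers: h(NOOP) (immutable location containing (0, bottom)) or &H_p. *)
Inductive Ptr : Type := PNoop | PH (p : nat).

(* Program counter: Idle (no pending DoOp) or the next line to execute.
   Lines 10 and 11 are purely local; they are folded into lines 9 and 12. *)
Inductive PC : Type := Idle | L2 | L3 | L4 | L5 | L6 | L7 | L8 | L9 | L12 | L13 | L14.

Section Model.
Variables (OP RES Q : Type) (s0 : Q) (applyT : OP -> Q -> Q * RES).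

(* apply on NOOP never happens in U (a NOOP in A is never found with a NULL
   response); a dummy value is used to make the function total. *)
Definition applyU (o : OpName OP) (s : Q) : Q * Resp RES :=
  match o with
  | NOOP => (s, RBot)
  | OpN o => let (s', r) := applyT o s in (s', RVal r)
  end.

Record Local : Type := mkLocal {
  pc : PC;
  cnt : nat;            (* number of DoOp invocations started so far *)
  myop : OpName OP;
  lt : nat;
  ts : nat;
  ss : Q;
  rs : Resp RES;
  ps : Ptr;
  tA : nat;
  oA : OpName OP;
  pA : Ptr
}.

Definition local0 : Local :=
  mkLocal Idle 0 NOOP 0 0 s0 RBot PNoop 0 NOOP PNoop.

Record Config : Type := mkConfig {
  Cv : nat;
  Av : nat * OpName OP * Ptr;
  Sv : nat * Q * Resp RES * Ptr;
  Hv : nat -> nat * Resp RES;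
  Lv : nat -> Local
}.

Definition config0 : Config :=
  mkConfig 1 (0, NOOP, PNoop) (0, s0, RBot, PNoop) (fun _ => (0, RNull))
           (fun _ => local0).

Definition upd {X : Type} (f : nat -> X) (p : nat) (x : X) : nat -> X :=
  fun q => if Nat.eqb q p then x else f q.

Definition deref (c : Config) (ptr : Ptr) : nat * Resp RES :=
  match ptr with
  | PNoop => (0, RBot)
  | PH q => Hv c q
  end.

(* GCAS(=, *ptr, old, new); h(NOOP) is immutable. *)
Definition gcasPtr (H : nat -> nat * Resp RES) (ptr : Ptr)
    (old new : nat * Resp RES)
  : (nat -> nat * Resp RES) -> Prop :=
  fun H' => match ptr with
  | PNoop => H' = H
  | PH q => (H q = old /\ H' = upd H q new) \/ (H q <> old /\ H' = H)
  end.

Definition setL (c : Config) (p : nat) (l : Local) : Config :=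
  mkConfig (Cv c) (Av c) (Sv c) (Hv c) (upd (Lv c) p l).

Definition withPC (l : Local) (n : PC) : Local :=
  mkLocal n (cnt l) (myop l) (lt l) (ts l) (ss l) (rs l) (ps l) (tA l) (oA l) (pA l).

Inductive step (p : nat) (c c' : Config) : Prop :=
  (* line 1: invocation of DoOp(o) *)
  | st_invoke (o : OP) :
      pc (Lv c p) = Idle ->
      c' = setL c p (let l := Lv c p in
             mkLocal L2 (S (cnt l)) (OpN o) (lt l) (ts l) (ss l) (rs l) (ps l)
                     (tA l) (oA l) (pA l)) ->
      step p c c'
  (* line 2: t := F&I(C) *)
  | st_fai :
      pc (Lv c p) = L2 ->
      c' = mkConfig (S (Cv c)) (Av c) (Sv c) (Hv c)
             (upd (Lv c) p (let l := Lv c p in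
                mkLocal L3 (cnt l) (myop l) (Cv c) (ts l) (ss l) (rs l) (ps l)
                        (tA l) (oA l) (pA l))) ->
      step p c c'
  (* line 3: H_p := (t, NULL) *)
  | st_init :
      pc (Lv c p) = L3 ->
      c' = mkConfig (Cv c) (Av c) (Sv c) (upd (Hv c) p (lt (Lv c p), RNull))
             (upd (Lv c) p (withPC (Lv c p) L4)) ->
      step p c c'
  | st_loop_in :
      pc (Lv c p) = L4 -> Hv c p = (lt (Lv c p), RNull) ->
      c' = setL c p (withPC (Lv c p) L5) ->
      step p c c'
  | st_loop_out :
      pc (Lv c p) = L4 -> Hv c p <> (lt (Lv c p), RNull) ->
      c' = setL c p (withPC (Lv c p) L14) ->
      step p c c'
  (* line 5: (t', s', r', roptr') := S [starred variables] *)
  | st_readS (t0 : nat) (s1 : Q) (r1 : Resp RES) (p1 : Ptr) :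
      pc (Lv c p) = L5 -> Sv c = (t0, s1, r1, p1) ->
      c' = setL c p (let l := Lv c p in
             mkLocal L6 (cnt l) (myop l) (lt l) t0 s1 r1 p1 (tA l) (oA l) (pA l)) ->
      step p c c'
  (* line 6: GCAS(=, deref roptr_star, (t_star, NULL), (t_star, r_star)) *)
  | st_help (H' : nat -> nat * Resp RES) :
      pc (Lv c p) = L6 ->
      gcasPtr (Hv c) (ps (Lv c p)) (ts (Lv c p), RNull) (ts (Lv c p), rs (Lv c p)) H' ->
      c' = mkConfig (Cv c) (Av c) (Sv c) H' (upd (Lv c) p (withPC (Lv c p) L7)) ->
      step p c c'
  (* line 7: GCAS(>, A, (t,-,-), (t, o, &H_p)) *)
  | st_announce_ok :
      pc (Lv c p) = L7 -> fst (fst (Av c)) > lt (Lv c p) ->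
      c' = mkConfig (Cv c) (lt (Lv c p), myop (Lv c p), PH p) (Sv c) (Hv c)
             (upd (Lv c) p (withPC (Lv c p) L8)) ->
      step p c c'
  | st_announce_fail :
      pc (Lv c p) = L7 -> ~ (fst (fst (Av c)) > lt (Lv c p)) ->
      c' = setL c p (withPC (Lv c p) L8) ->
      step p c c'
  (* line 8: (t', o', roptr') := A *)
  | st_readA (t1 : nat) (o1 : OpName OP) (p1 : Ptr) :
      pc (Lv c p) = L8 -> Av c = (t1, o1, p1) ->
      c' = setL c p (let l := Lv c p in
             mkLocal L9 (cnt l) (myop l) (lt l) (ts l) (ss l) (rs l) (ps l) t1 o1 p1) ->
      step p c c'
  (* lines 9-10: read *roptr' and test it against (t', NULL) *)
  | st_check_pending :
      pc (Lv c p) = L9 -> deref c (pA (Lv c p)) = (tA (Lv c p), RNull) ->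
      c' = setL c p (withPC (Lv c p) L12) ->
      step p c c'
  | st_check_done :
      pc (Lv c p) = L9 -> deref c (pA (Lv c p)) <> (tA (Lv c p), RNull) ->
      c' = setL c p (withPC (Lv c p) L13) ->
      step p c c'
  (* lines 11-12: (s', r') := apply(o', s_star);
     GCAS(=, S, (t_star, s_star, r_star, roptr_star), (t', s', r', roptr')) *)
  | st_apply_ok :
      pc (Lv c p) = L12 ->
      Sv c = (ts (Lv c p), ss (Lv c p), rs (Lv c p), ps (Lv c p)) ->
      c' = mkConfig (Cv c)  (Av c)
             (let l := Lv c p in
              (tA l, fst (applyU (oA l) (ss l)), snd (applyU (oA l) (ss l)), pA l))
             (Hv c) (upd (Lv c) p (withPC (Lv c p) L4)) ->
      step p c c'
  | st_apply_fail :
      pc (Lv c p) = L12 ->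
      Sv c <> (ts (Lv c p), ss (Lv c p), rs (Lv c p), ps (Lv c p)) ->
      c' = setL c p (withPC (Lv c p) L4) ->
      step p c c'
  (* line 13: GCAS(=, A, (t', o', roptr'), (t, o, &H_p)) *)
  | st_replace_ok :
      pc (Lv c p) = L13 -> Av c = (tA (Lv c p), oA (Lv c p), pA (Lv c p)) ->
      c' = mkConfig (Cv c) (lt (Lv c p), myop (Lv c p), PH p) (Sv c) (Hv c)
             (upd (Lv c) p (withPC (Lv c p) L4)) ->
      step p c c'
  | st_replace_fail :
      pc (Lv c p) = L13 -> Av c <> (tA (Lv c p), oA (Lv c p), pA (Lv c p)) ->
      c' = setL c p (withPC (Lv c p) L4) ->
      step p c c'
  (* line 14: return H_p.response *)
  | st_return :
      pc (Lv c p) = L14 ->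
      c' = setL c p (withPC (Lv c p) Idle) ->
      step p c c'.

(* Crashes are
   modelled by processes that are no longer scheduled. *)
Definition execution (ex : nat -> Config) (sched : nat -> nat) : Prop :=
  ex 0 = config0 /\ forall i, step (sched i) (ex i) (ex (S i)).

(* Operations: the initial NOOP, or the k-th invocation (k >= 1) of DoOp by
   process p. *)
Inductive OpId : Type := NoopOp | Inv (p k : nat).

(* t(o) = v : the F&I at line 2 of o returned v (t(NOOP) = 0).  If line 2 of o
   is never executed, t(o) = infinity, i.e. opTime o v holds for no v. *)
Definition opTime (ex : nat -> Config) (sched : nat -> nat) (o : OpId) (v : nat) : Prop :=
  match o with
  | NoopOp => v = 0
  | Inv p k => exists i, sched i = p /\ pc (Lv (ex i) p) = L2 /\
                         cnt (Lv (ex i) p) = k /\ Cv (ex i) = v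
  end.

Definition hOf (o : OpId) : Ptr :=
  match o with NoopOp => PNoop | Inv p _ => PH p end.

Definition isDone (ex : nat -> Config) (sched : nat -> nat) (o : OpId) (N : nat) : Prop :=
  exists v, opTime ex sched o v /\
    exists T' r, T' <= N /\ deref (ex T') (hOf o) = (v, r) /\ r <> RNull.

End Model.

(* Call a pair (v, &H_p) held in S, in A or in a local variable safe when either
   H_p has already held (v, r) with r <> NULL, or p is inside the loop of its
   operation with time stamp v and H_p = (v, NULL).  Safety is preserved by every
   step: H_p leaves (v, NULL) only at line 6, which writes a response read from S,
   and these are never NULL; new pairs (t, &H_p) are created only by p itself from
   inside its loop; and p resets H_p at line 3, outside the loop, when no pending
   pair refers to it.  So when line 6 is executed with the pair (t(o), h(o)), either
   o is already done, or H_p = (t(o), NULL) and this very GCAS succeeds. *)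
From Stdlib Require Import Arith Lia.

Set Implicit Arguments.

Section Invariant.
Variables (OP RES Q : Type) (applyT : OP -> Q -> Q * RES).
Notation Cfg := (Config OP RES Q).
Notation step := (step applyT).

Definition in_loop (x : PC) : Prop :=
  match x with L4 | L5 | L6 | L7 | L8 | L9 | L12 | L13 => True | _ => False end.

Definition responses_nonnull (c : Cfg) : Prop :=
  snd (fst (Sv c)) <> RNull /\ forall p, rs (Lv c p) <> RNull.

Definition loop_stamps_H (c : Cfg) : Prop :=
  forall p, in_loop (pc (Lv c p)) -> fst (Hv c p) = lt (Lv c p).

Definition pending (c : Cfg) (v p : nat) : Prop :=
  Hv c p = (v, RNull) /\ in_loop (pc (Lv c p)) /\ lt (Lv c p) = v.

Definition safe_ref (done : nat -> nat -> Prop) (c : Cfg) (v : nat) (ptr : Ptr) : Prop :=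
  match ptr with
  | PNoop => True
  | PH p => done v p \/ pending c v p
  end.

Definition stored_ref (c : Cfg) (v : nat) (ptr : Ptr) : Prop :=
  (v = fst (fst (fst (Sv c))) /\ ptr = snd (Sv c)) \/
  (v = fst (fst (Av c)) /\ ptr = snd (Av c)) \/
  exists p, (v = ts (Lv c p) /\ ptr = ps (Lv c p)) \/
            (v = tA (Lv c p) /\ ptr = pA (Lv c p)).

Definition invariant (done : nat -> nat -> Prop) (c : Cfg) : Prop :=
  responses_nonnull c /\ loop_stamps_H c /\
  forall v ptr, stored_ref c v ptr -> safe_ref done c v ptr.

Lemma gcasPtr_null_cases {H H' : nat -> nat * Resp RES} {ptr t r} :
  gcasPtr H ptr (t, RNull) (t, r) H' ->
  forall p, H' p = H p \/ (H p = (t, RNull) /\ H' p = (t, r)).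
Proof.
  destruct ptr as [|q]; simpl; intros G p.
  - subst; auto.
  - destruct G as [[E1 E2]|[E1 E2]]; subst; unfold upd; auto.
    destruct (Nat.eqb_spec p q); subst; auto.
Qed.

Lemma applyU_response_nonnull o (s : Q) : snd (applyU applyT o s) <> RNull.
Proof.
  destruct o as [|o]; simpl; [discriminate|].
  destruct (applyT o s); simpl; discriminate.
Qed.

Lemma responses_nonnull_step s (c c' : Cfg) :
  step s c c' -> responses_nonnull c -> responses_nonnull c'.
Proof.
  intros Hs [HS Hrs]; destruct Hs; subst c'; unfold responses_nonnull, setL, withPC, upd;
    simpl; split; auto using applyU_response_nonnull;
    intros r; destruct (Nat.eqb r s); simpl; auto.
  all: match goal with E : Sv _ = _ |- _ => rewrite E in HS; exact HS end.
Qed.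

Lemma loop_stamps_H_step s (c c' : Cfg) :
  step s c c' -> loop_stamps_H c -> loop_stamps_H c'.
Proof.
  intros Hs HL p; destruct Hs; subst c'; unfold setL, withPC, upd; simpl;
    destruct (Nat.eqb_spec p s); subst; simpl; auto; intros Hin;
    try (simpl in Hin; contradiction);
    try (apply HL; match goal with E : pc _ = _ |- _ => rewrite E end; exact I).
  (* line 6: the GCAS keeps the time field of every H_q *)
  all: match goal with G : gcasPtr _ _ _ _ _ |- _ => pose proof (gcasPtr_null_cases G) as GC end.
  - assert (Hs : in_loop (pc (Lv c s))) by (rewrite H; exact I).
    destruct (GC s) as [E|[E1 E2]]; rewrite ?E, ?E2; auto.
    rewrite <- (HL s Hs), E1; reflexivity.
  - destruct (GC p) as [E|[E1 E2]]; rewrite ?E, ?E2; auto.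
    rewrite <- (HL p Hin), E1; reflexivity.
Qed.

Lemma pending_step s (c c' : Cfg) v p :
  step s c c' -> responses_nonnull c -> pending c v p ->
  pending c' v p \/ exists r, Hv c' p = (v, r) /\ r <> RNull.
Proof.
  intros Hs [_ Hrs] [HH [Hin Hlt]].
  destruct Hs; subst c'; unfold pending, setL, withPC, upd; simpl;
    destruct (Nat.eqb_spec p s); subst; simpl;
    try (match goal with E : pc _ = _ |- _ => rewrite E in Hin; destruct Hin end);
    auto 6.
  all: match goal with G : gcasPtr _ _ _ _ _ |- _ => pose proof (gcasPtr_null_cases G) as GC end.
  - destruct (GC s) as [E|[E1 E2]]; rewrite ?E; auto.
    right; exists (rs (Lv c s)); split; [congruence|apply Hrs].
  - destruct (GC p) as [E|[E1 E2]]; rewrite ?E; auto.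
    right; exists (rs (Lv c s)); split; [congruence|apply Hrs].
Qed.

Lemma safe_ref_step {done done' : nat -> nat -> Prop} {s} {c c' : Cfg} {v ptr} :
  step s c c' -> responses_nonnull c ->
  (forall v p, done v p -> done' v p) ->
  (forall v p r, Hv c' p = (v, r) -> r <> RNull -> done' v p) ->
  safe_ref done c v ptr -> safe_ref done' c' v ptr.
Proof.
  intros Hs Hnn Hmono Hrec; destruct ptr as [|p]; simpl; auto.
  intros [Hd|Hp]; auto.
  destruct (pending_step Hs Hnn Hp) as [Hp'|[r [E Hr]]]; eauto.
Qed.

Ltac stored_ref_old :=
  let fin := first [ reflexivity
                   | match goal with E : Sv _ = _ |- _ => rewrite E; reflexivity end
                   | match goal with E : Av _ = _ |- _ => rewrite E; reflexivity end ] in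
  left; first [ left; split; fin
              | right; left; split; fin
              | right; right; eexists; first [left; split; fin | right; split; fin] ].

Lemma stored_ref_step s (c c' : Cfg) v ptr :
  step s c c' -> stored_ref c' v ptr ->
  stored_ref c v ptr \/
  (in_loop (pc (Lv c s)) /\ v = lt (Lv c s) /\ ptr = PH s /\ Hv c' s = Hv c s).
Proof.
  intros Hs HP; destruct Hs; subst c'; unfold stored_ref, setL, withPC, upd in *; simpl in *.
  all: destruct HP as [[-> ->]|[[-> ->]|[r [[-> ->]|[-> ->]]]]];
    try (destruct (Nat.eqb_spec r s); subst; simpl).
  all: first [ stored_ref_old
             | right; repeat split;
               match goal with E : pc _ = _ |- _ => rewrite E end; exact I ].
Qed.

Lemma invariant_step {done done' : nat -> nat -> Prop} s (c c' : Cfg) :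
  step s c c' -> invariant done c ->
  (forall v p, done v p -> done' v p) ->
  (forall v p r, Hv c' p = (v, r) -> r <> RNull -> done' v p) ->
  invariant done' c'.
Proof.
  intros Hs [Hnn [HL Hsafe]] Hmono Hrec.
  split; [eauto using responses_nonnull_step|split; [eauto using loop_stamps_H_step|]].
  intros v ptr HP.
  destruct (stored_ref_step Hs HP) as [HP0|[Hin [-> [-> HH]]]];
    [eauto using safe_ref_step|].
  (* a pair (lt, &H_s) just announced by s *)
  pose proof (HL s Hin) as Hstamp.
  destruct (Hv c s) as [t r] eqn:E; simpl in Hstamp; subst t.
  destruct r; [|left; eapply Hrec; eauto; discriminate..].
  apply (safe_ref_step Hs Hnn Hmono Hrec); right; repeat split; auto.
Qed.

Lemma invariant_config0 (done : nat -> nat -> Prop) (s0 : Q) :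
  invariant done (@config0 OP RES Q s0).
Proof.
  split; [|split].
  - split; simpl; discriminate.
  - intros p; simpl; tauto.
  - intros v ptr HP; unfold stored_ref in HP; simpl in HP.
    destruct HP as [[_ ->]|[[_ ->]|[r [[_ ->]|[_ ->]]]]]; exact I.
Qed.

Lemma help_completes s (c c' : Cfg) v p :
  step s c c' -> pc (Lv c s) = L6 -> ts (Lv c s) = v -> ps (Lv c s) = PH p ->
  responses_nonnull c -> Hv c p = (v, RNull) ->
  exists r, Hv c' p = (v, r) /\ r <> RNull.
Proof.
  intros Hs Hpc Hts Hps [_ Hrs] HH.
  destruct Hs; try congruence.
  match goal with G : gcasPtr _ _ _ _ _ |- _ => rename G into Hgcas end.
  rewrite Hps, Hts in Hgcas; simpl in Hgcas.
  destruct Hgcas as [[_ ->]|[Hne _]]; [|congruence].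
  exists (rs (Lv c s)); subst c'; simpl; unfold upd; rewrite Nat.eqb_refl; auto.
Qed.

End Invariant.

Section Execution.
Variables (OP RES Q : Type) (s0 : Q) (applyT : OP -> Q -> Q * RES)
  (ex : nat -> Config OP RES Q) (sched : nat -> nat).
Hypothesis Hex : execution s0 applyT ex sched.

Definition done_by (i v p : nat) : Prop :=
  exists T' r, T' <= i /\ Hv (ex T') p = (v, r) /\ r <> RNull.

Lemma invariant_execution i : invariant (done_by i) (ex i).
Proof.
  destruct Hex as [H0 Hst]; induction i.
  - rewrite H0; apply invariant_config0.
  - apply (invariant_step (Hst i) IHi).
    + intros v p [T' [r [Hle R]]]; exists T', r; split; [lia|exact R].
    + intros v p r E Hr; exists (S i), r; auto.
Qed.

End Execution.

Theorem mainTheorem6 (OP RES Q : Type) (s0 : Q) (applyT : OP -> Q -> Q * RES)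
  (ex : nat -> Config OP RES Q) (sched : nat -> nat)
  (Hex : execution s0 applyT ex sched)
  (T q : nat) (o : OpId) (v : nat) :
  sched T = q ->
  pc (Lv (ex T) q) = L6 ->
  opTime ex sched o v ->
  ts (Lv (ex T) q) = v ->
  ps (Lv (ex T) q) = hOf o ->
  isDone ex sched o (S T).
Proof.
  intros Hq Hpc Hop Hts Hps.
  destruct o as [|p k].
  - simpl in Hop; subst v.
    exists 0; split; [reflexivity|]; exists 0, RBot; repeat split; [lia|discriminate].
  - exists v; split; [exact Hop|]; simpl.
    destruct (invariant_execution Hex T) as [Hnn [_ Hsafe]].
    assert (Hstored : stored_ref (ex T) v (PH p)).
    { right; right; exists q; left; auto. }
    destruct (Hsafe _ _ Hstored) as [[T' [r [Hle [E Hr]]]]|[HH _]].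
    + exists T', r; repeat split; auto.
    + pose proof (proj2 Hex T) as Hstep; rewrite Hq in Hstep.
      destruct (help_completes Hstep Hpc Hts Hps Hnn HH) as [r [E Hr]].
      exists (S T), r; auto.
Qed.
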